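(* Let $T\in\mathbb R^{m\times n}$ be injective and satisfy the positive cone condition, $y\in\mathbb R^m$, and $\lambda>0$. Then there exists $\varepsilon\in(0,\lambda)$ such that $N(\lambda)\subset N(\mu)$ for all $\mu\in[\lambda-\varepsilon,\lambda]$.
   Context: For $\lambda>0$, $x_\lambda$ is the unique minimizer of $x\mapsto\frac{\lambda}{2}\|Tx-y\|_2^2+\|x\|_1$ on $\mathbb R^n$; $N(\lambda)=\{i:x_\lambda^i=0\}$. Positive cone condition: for every nonempty $J\subset\{1,\dots,n\}$, with $T^J$ the submatrix of columns indexed by $J$ and $S_J=((T^J)^TT^J)^{-1}$, one has $(S_J)_{i,i}-\sum_{j\ne i}|(S_J)_{i,j}|\ge0$ for all $i\in J$. *)

From mathcomp Require Import all_boot all_order all_algebra.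
Set Implicit Arguments. Unset Strict Implicit. Unset Printing Implicit Defensive.
Import Order.TTheory GRing.Theory Num.Theory.
Local Open Scope ring_scope.

Definition lasso_obj (R : realFieldType) (m n : nat) (T : 'M[R]_(m, n))
  (y : 'cV[R]_m) (lam : R) (x : 'cV[R]_n) : R :=
  lam / 2%:R * (\sum_(i < m) ((T *m x - y) i 0) ^+ 2) + \sum_(j < n) `|x j 0|.

Definition is_lasso_min (R : realFieldType) (m n : nat) (T : 'M[R]_(m, n))
  (y : 'cV[R]_m) (lam : R) (x : 'cV[R]_n) : Prop :=
  forall z : 'cV[R]_n, lasso_obj T y lam x <= lasso_obj T y lam z.

Definition zero_set (R : realFieldType) (n : nat) (x : 'cV[R]_n) : {set 'I_n} :=
  [set i | x i 0 == 0].

(* T^J : submatrix of the columns indexed by J (in increasing order) *)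
Definition colsJ (R : realFieldType) (m n : nat) (T : 'M[R]_(m, n))
  (J : {set 'I_n}) : 'M[R]_(m, #|J|) :=
  colsub (fun j : 'I_#|J| => enum_val j) T.

Definition SJ (R : realFieldType) (m n : nat) (T : 'M[R]_(m, n))
  (J : {set 'I_n}) : 'M[R]_#|J| :=
  invmx ((colsJ T J)^T *m colsJ T J).

Definition positive_cone_condition (R : realFieldType) (m n : nat)
  (T : 'M[R]_(m, n)) : Prop :=
  forall J : {set 'I_n}, J != set0 ->
    forall i : 'I_#|J|,
      0 <= SJ T J i i - \sum_(j < #|J| | j != i) `|SJ T J i j|.

From mathcomp Require Import all_boot all_order all_algebra.
From mathcomp Require Import reals.
From mathcomp Require Import ring lra.
From Stdlib Require Import Classical_Prop.
Import Order.TTheory GRing.Theory Num.Theory.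
Local Open Scope ring_scope.
Set Implicit Arguments. Unset Strict Implicit. Unset Printing Implicit Defensive.

(* Let [x_lam] minimize [lam/2 ||T x - y||^2 + ||x||_1] and write
   [p(lam, x) = lam T^T (y - T x)].  The proof has three ingredients.
   1. Optimality: [|p_i| <= 1] and [p_i x_i = |x_i|] (a subgradient of the
      l1 norm), obtained by perturbing one coordinate at a time.
   2. Stability: for [mu <= lam], pairing the two optimality conditions gives
      [||T (x_lam - x_mu)||^2 <= (1/mu - 1/lam) ||x_lam - x_mu||_1]; with a left
      inverse of [T] this yields [|x_lam - x_mu|_oo <= K (1/mu - 1/lam)].  In
      particular minimizers are unique, and for [mu] close to [lam] every
      nonzero entry of [x_lam] keeps its sign in [x_mu].
   3. Positive cone condition: on the support [J] of [x_mu], the difference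
      [v = x_lam - x_mu] solves [(T^J)^T T^J v_J = (s_i w_i)_i] with signs
      [s_i] and weights [w_i >= 0]; diagonal dominance of [S_J] forces [v]
      to follow the signs [s_i] where [w] is maximal, which is incompatible
      with an index where [x_lam] vanishes but [x_mu] does not. *)

Section ScalarFacts.
Variable R : realFieldType.
Implicit Types (a b p q A B : R).

(* If [t A + t^2 B >= 0] for all small [t > 0] and [B >= 0], then [A >= 0]:
   otherwise [t = -A / (2B - A)] is an admissible witness of negativity.
   This turns minimality along a segment into a first-order inequality. *)
Lemma nonneg_of_quadratic A B : 0 <= B ->
  (forall t : R, 0 < t -> t <= 1 -> 0 <= t * A + t ^+ 2 * B) -> 0 <= A.
Proof.
move=> B0 H; rewrite leNgt; apply/negP => A0.
pose D := 2 * B - A; pose t := - A / D.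
have D0 : 0 < D by rewrite /D; lra.
have tD : t * D = - A by rewrite /t mulfVK // gt_eqF.
have t0 : 0 < t by rewrite /t divr_gt0 // oppr_gt0.
have t1 : t <= 1 by rewrite /t ler_pdivrMr // mul1r /D; lra.
have := H t t0 t1.
have -> : t * A + t ^+ 2 * B = t * (A + t * B) by ring.
rewrite pmulr_rge0 // => h.
have : 0 <= (A + t * B) * D by rewrite mulr_ge0 // ltW.
have -> : (A + t * B) * D = A * D + (t * D) * B by ring.
rewrite tD /D; nra.
Qed.

Lemma subgrad_pair_bound al be A B p q : 0 <= al -> al <= be ->
  `|p| <= 1 -> `|q| <= 1 -> p * A = `|A| -> q * B = `|B| ->
  (A - B) * (be * q - al * p) <= (be - al) * `|A - B|.
Proof.
move=> al0 albe p1 q1 pA qB.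
have qA : q * A <= `|A|.
  by apply: le_trans (ler_norm _) _; rewrite normrM ler_piMl.
have pB : p * B <= `|B|.
  by apply: le_trans (ler_norm _) _; rewrite normrM ler_piMl.
have dist : `|A| - `|B| <= `|A - B| by apply: lerB_dist.
have be0 : 0 <= be by apply: le_trans albe.
have k1 : be * (q * A) <= be * `|A| by apply: ler_wpM2l.
have k2 : al * (p * B) <= al * `|B| by apply: ler_wpM2l.
have k3 : (be - al) * (`|A| - `|B|) <= (be - al) * `|A - B|.
  by apply: ler_wpM2l; rewrite ?subr_ge0.
have -> : (A - B) * (be * q - al * p) =
  be * (q * A) - be * (q * B) - al * (p * A) + al * (p * B) by ring.
rewrite pA qB; lra.
Qed.

Lemma subgrad_norm1 p b : p * b = `|b| -> b != 0 -> `|p| = 1.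
Proof.
move=> pb b0; apply: (mulIf (x := `|b|)); first by rewrite normr_eq0.
by rewrite -normrM pb normr_id mul1r.
Qed.

(* If [b] is closer to [a != 0] than [|a|], then [a] and [b] have the same
   sign, hence so do their subgradients. *)
Lemma subgrad_agree p q a b : p * a = `|a| -> q * b = `|b| -> a != 0 ->
  `|a - b| < `|a| -> p * q = 1.
Proof.
move=> pa qb a0 close.
have na : 0 < `|a| by rewrite normr_gt0.
have h1 : a * (a - b) <= `|a| * `|a - b| by rewrite -normrM ler_norm.
have h2 : `|a| * `|a - b| < `|a| * `|a| by rewrite ltr_pM2l.
have h3 : `|a| * `|a| = a * a by rewrite -normrM ger0_norm // -expr2 sqr_ge0.
have ab0 : 0 < a * b by nra.
apply: (mulIf (x := a * b)); first by rewrite gt_eqF.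
have -> : p * q * (a * b) = `|a| * `|b| by rewrite -pa -qb; ring.
by rewrite mul1r -normrM gtr0_norm.
Qed.

Lemma l1_sqr_le k (x : 'I_k -> R) :
  (\sum_(i < k) `|x i|) ^+ 2 <= k%:R * \sum_(i < k) x i ^+ 2.
Proof.
have amgm i j : `|x i| * `|x j| <= (x i ^+ 2 + x j ^+ 2) / 2.
  by rewrite -[x i ^+ 2]real_normK ?num_real // -[x j ^+ 2]real_normK ?num_real //
     (leif_mean_square _ _).1.
rewrite expr2 mulr_suml.
apply: le_trans (_ : \sum_(i < k) \sum_(j < k) (x i ^+ 2 + x j ^+ 2) / 2 <= _).
  by apply: ler_sum => i _; rewrite mulr_sumr; apply: ler_sum => j _.
under eq_bigr do rewrite -mulr_suml big_split /= sumr_const card_ord.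
rewrite -mulr_suml big_split /= sumr_const card_ord sumrMnl -mulr2n.
by rewrite -[_ *+ 2]mulr_natr mulfK ?pnatr_eq0 // mulr_natl.
Qed.

End ScalarFacts.

Section MatrixFacts.
Variable R : realFieldType.

Lemma sum_sqr_col k (u : 'cV[R]_k) : \sum_(i < k) u i 0 ^+ 2 = (u^T *m u) 0 0.
Proof. by rewrite mxE; apply: eq_bigr => i _; rewrite mxE expr2. Qed.

Lemma col_norm_eq0 k (u : 'cV[R]_k) : u^T *m u = 0 -> u = 0.
Proof.
move=> /(congr1 (fun M : 'M_1 => M 0 0)); rewrite -sum_sqr_col mxE => /eqP.
rewrite psumr_eq0 => [/allP u0|i _]; last exact: sqr_ge0.
apply/matrixP => i j; rewrite (ord1 j) mxE; apply/eqP.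
by rewrite -sqrf_eq0; apply: u0; rewrite mem_index_enum.
Qed.

Lemma gram_unit_of_inj m k (M : 'M[R]_(m, k)) :
  (forall x : 'cV[R]_k, M *m x = 0 -> x = 0) -> M^T *m M \in unitmx.
Proof.
move=> Minj; rewrite -row_free_unit; apply/inj_row_free => u uG0.
have Gx : M^T *m M *m u^T = 0.
  by rewrite -[M^T *m M]trmxK trmx_mul trmxK -trmx_mul uG0 trmx0.
have : (M *m u^T)^T *m (M *m u^T) = 0.
  by rewrite trmx_mul -mulmxA [M^T *m _]mulmxA Gx mulmx0.
by move/col_norm_eq0/Minj/(congr1 trmx); rewrite trmxK trmx0.
Qed.

Lemma diag_dominant_sign k (S : 'M[R]_k) (q : 'I_k) (s w : 'I_k -> R) :
  0 <= S q q - \sum_(j < k | j != q) `|S q j| ->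
  (forall j, `|s j| = 1) -> (forall j, 0 <= w j) -> (forall j, w j <= w q) ->
  0 <= s q * (S *m \col_j (s j * w j)) q 0.
Proof.
move=> dom s1 w0 wq.
have sq2 : s q * s q = 1 by rewrite -expr2 -real_normK ?num_real // s1 expr1n.
rewrite mxE mulr_sumr (bigD1 q) //= mxE.
have -> : s q * (S q q * (s q * w q)) = S q q * w q * (s q * s q) by ring.
rewrite sq2 mulr1.
have off : - (\sum_(j < k | j != q) `|S q j|) * w q <=
    \sum_(j < k | j != q) s q * (S q j * (\col_j (s j * w j)) j 0).
  rewrite mulNr mulr_suml -sumrN; apply: ler_sum => j _; rewrite mxE.
  have nrm : `|s q * (S q j * (s j * w j))| = `|S q j| * w j.
    by rewrite !normrM !s1 (ger0_norm (w0 j)) mul1r mul1r.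
  apply: le_trans (_ : - `|s q * (S q j * (s j * w j))| <= _).
    by rewrite nrm lerN2 ler_wpM2l.
  by rewrite lerNl -normrN ler_norm.
have := mulr_ge0 dom (w0 q); rewrite mulrBl; lra.
Qed.

Lemma left_inverse_of_inj m k (M : 'M[R]_(m, k)) :
  (forall x : 'cV[R]_k, M *m x = 0 -> x = 0) -> exists L, L *m M = 1%:M.
Proof.
move=> Minj; exists (invmx (M^T *m M) *m M^T).
by rewrite -mulmxA mulVmx // gram_unit_of_inj.
Qed.

End MatrixFacts.

Section LassoOptimality.
Variables (R : realFieldType) (m n : nat) (T : 'M[R]_(m, n)) (y : 'cV[R]_m).

(* [l1_subgrad lam x = lam T^T (y - T x)]; at a minimizer [x] of the lasso
   objective this is a subgradient of [||.||_1] at [x]. *)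
Definition l1_subgrad (lam : R) (x : 'cV[R]_n) : 'cV[R]_n :=
  lam *: (T^T *m (y - T *m x)).

Lemma lasso_obj_shift lam (a : 'cV[R]_n) i s :
  lasso_obj T y lam (a + s *: delta_mx i 0) =
  lasso_obj T y lam a - s * l1_subgrad lam a i 0
  + lam / 2 * s ^+ 2 * (\sum_(k < m) T k i ^+ 2) + (`|a i 0 + s| - `|a i 0|).
Proof.
rewrite /lasso_obj /l1_subgrad.
have res k : (T *m (a + s *: delta_mx i 0) - y) k 0 = (T *m a - y) k 0 + s * T k i.
  by rewrite mulmxDr -scalemxAr -colE !mxE; ring.
under eq_bigr do rewrite res.
have -> : \sum_(k < m) ((T *m a - y) k 0 + s * T k i) ^+ 2 =
   \sum_(k < m) ((T *m a - y) k 0) ^+ 2 + 2 * s * \sum_(k < m) (T *m a - y) k 0 * T k i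
   + s ^+ 2 * \sum_(k < m) T k i ^+ 2.
  by rewrite !mulr_sumr -!big_split /=; apply: eq_bigr => k _; ring.
have -> : (lam *: (T^T *m (y - T *m a))) i 0 = - lam * \sum_(k < m) (T *m a - y) k 0 * T k i.
  by rewrite !mxE mulNr -mulrN -sumrN; congr (_ * _); apply: eq_bigr => k _; rewrite !mxE; ring.
rewrite [X in _ + X = _](bigD1 i) //= [X in _ = _ + X + _ + _ + _](bigD1 i) //=.
have -> : \sum_(j < n | j != i) `|(a + s *: delta_mx i 0) j 0| = \sum_(j < n | j != i) `|a j 0|.
  by apply: eq_bigr => j ji; rewrite !mxE (negbTE ji) mulr0 addr0.
rewrite !mxE !eqxx mulr1.
have two : (2 : R) != 0 by rewrite pnatr_eq0.
by field.
Qed.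

(* At a minimizer, the i-th entry of [l1_subgrad] is a subgradient of the
   absolute value at [a i 0]: moving the i-th coordinate to any [z] along the
   segment cannot decrease the objective. *)
Lemma lasso_min_subgrad_ineq lam (a : 'cV[R]_n) : 0 < lam -> is_lasso_min T y lam a ->
  forall i z, l1_subgrad lam a i 0 * (z - a i 0) <= `|z| - `|a i 0|.
Proof.
move=> lam0 amin i z.
set d := z - a i 0; set g := l1_subgrad lam a i 0.
set S := \sum_(k < m) T k i ^+ 2.
have S0 : 0 <= S by apply: sumr_ge0 => k _; apply: sqr_ge0.
rewrite -subr_ge0; apply: (@nonneg_of_quadratic _ _ (lam / 2 * d ^+ 2 * S)).
  apply: mulr_ge0 => //; apply: mulr_ge0; last exact: sqr_ge0.
  by rewrite divr_ge0 // ltW.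
move=> t t0 t1.
have := amin (a + (t * d) *: delta_mx i 0).
rewrite lasso_obj_shift -/S -/g => H.
have convex : `|a i 0 + t * d| <= (1 - t) * `|a i 0| + t * `|z|.
  have -> : a i 0 + t * d = (1 - t) * a i 0 + t * z by rewrite /d; ring.
  apply: le_trans (ler_normD _ _) _.
  by rewrite !normrM (ger0_norm (ltW t0)) ger0_norm ?subr_ge0.
have -> : t * (`|z| - `|a i 0| - g * d) + t ^+ 2 * (lam / 2 * d ^+ 2 * S)
  = - ((t * d) * g) + lam / 2 * (t * d) ^+ 2 * S
  + ((1 - t) * `|a i 0| + t * `|z|) - `|a i 0| by ring.
lra.
Qed.

Lemma lasso_min_subgrad lam (a : 'cV[R]_n) : 0 < lam -> is_lasso_min T y lam a ->
  forall i, `|l1_subgrad lam a i 0| <= 1 /\ l1_subgrad lam a i 0 * a i 0 = `|a i 0|.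
Proof.
move=> lam0 amin i; set g := l1_subgrad lam a i 0.
have ineq := lasso_min_subgrad_ineq lam0 amin i; rewrite -/g in ineq.
have up := ineq (a i 0 + 1); have down := ineq (a i 0 - 1); have zero := ineq 0.
have n1 : `|a i 0 + 1| <= `|a i 0| + 1 by rewrite (le_trans (ler_normD _ _)) ?normr1.
have n2 : `|a i 0 - 1| <= `|a i 0| + 1 by rewrite (le_trans (ler_normD _ _)) ?normrN1.
have g1 : `|g| <= 1.
  by rewrite ler_norml; apply/andP; split; move: up down; rewrite addrAC subrr; lra.
split=> //; apply/eqP; rewrite eq_le.
have -> : `|a i 0| <= g * a i 0 by move: zero; rewrite normr0; lra.
by rewrite andbT (le_trans (ler_norm _)) // normrM ler_piMl.
Qed.

Lemma normal_eq_diff lam mu (a b : 'cV[R]_n) : lam != 0 -> mu != 0 ->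
  T^T *m (T *m (a - b)) = mu^-1 *: l1_subgrad mu b - lam^-1 *: l1_subgrad lam a.
Proof.
move=> lam0 mu0; rewrite /l1_subgrad !scalerA !mulVf // !scale1r -mulmxBr.
by congr (_ *m _); rewrite mulmxBr opprB [RHS]addrC subrKA.
Qed.

Lemma energy_identity (v : 'cV[R]_n) :
  \sum_(k < m) (T *m v) k 0 ^+ 2 = \sum_(i < n) v i 0 * (T^T *m (T *m v)) i 0.
Proof.
rewrite sum_sqr_col trmx_mul -mulmxA mxE.
by apply: eq_bigr => i _; rewrite mxE.
Qed.

Definition pair_weight lam mu (a b : 'cV[R]_n) j : R :=
  mu^-1 - lam^-1 * (l1_subgrad lam a j 0 * l1_subgrad mu b j 0).

Section PairOfMinimizers.
Variables (lam mu : R) (a b : 'cV[R]_n).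
Hypotheses (mu0 : 0 < mu) (mulam : mu <= lam).
Hypotheses (amin : is_lasso_min T y lam a) (bmin : is_lasso_min T y mu b).

Let lam0 : 0 < lam. Proof. exact: lt_le_trans mu0 mulam. Qed.

Lemma lasso_min_energy :
  \sum_(k < m) (T *m (a - b)) k 0 ^+ 2 <= (mu^-1 - lam^-1) * \sum_(i < n) `|a i 0 - b i 0|.
Proof.
rewrite energy_identity (normal_eq_diff _ _ (lt0r_neq0 lam0) (lt0r_neq0 mu0)).
have := lasso_min_subgrad mu0 bmin; have := lasso_min_subgrad lam0 amin.
move: (l1_subgrad lam a) (l1_subgrad mu b) => ga gb opta optb.
rewrite mulr_sumr; apply: ler_sum => i _; rewrite !mxE.
have [ga1 gaa] := opta i; have [gb1 gbb] := optb i.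
by apply: subgrad_pair_bound => //; [rewrite invr_ge0 ltW | rewrite lef_pV2 ?posrE].
Qed.

Lemma pair_weight_ge j : mu^-1 - lam^-1 <= pair_weight lam mu a b j.
Proof.
have [ga1 _] := lasso_min_subgrad lam0 amin j.
have [gb1 _] := lasso_min_subgrad mu0 bmin j.
have gg1 : l1_subgrad lam a j 0 * l1_subgrad mu b j 0 <= 1.
  by rewrite (le_trans (ler_norm _)) // normrM -[1]mulr1 ler_pM.
by rewrite lerD2l lerN2 ler_piMr // invr_ge0 ltW.
Qed.

(* Where [a] does not vanish and [b] is close to it, both subgradients equal
   the common sign, so the weight is minimal. *)
Lemma pair_weight_support j : a j 0 != 0 -> `|a j 0 - b j 0| < `|a j 0| ->
  pair_weight lam mu a b j = mu^-1 - lam^-1.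
Proof.
move=> aj close; have [_ gaa] := lasso_min_subgrad lam0 amin j.
have [_ gbb] := lasso_min_subgrad mu0 bmin j.
by rewrite /pair_weight (subgrad_agree gaa gbb aj close) mulr1.
Qed.

Lemma normal_eq_pair_weight j : b j 0 != 0 ->
  (T^T *m (T *m (a - b))) j 0 = l1_subgrad mu b j 0 * pair_weight lam mu a b j.
Proof.
move=> bj; have [_ gbb] := lasso_min_subgrad mu0 bmin j.
have g2 : l1_subgrad mu b j 0 * l1_subgrad mu b j 0 = 1.
  by rewrite -expr2 -real_normK ?num_real // (subgrad_norm1 gbb bj) expr1n.
rewrite (normal_eq_diff _ _ (lt0r_neq0 lam0) (lt0r_neq0 mu0)) /pair_weight.
move: (l1_subgrad lam a) (l1_subgrad mu b) g2 => ga gb g2; rewrite !mxE.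
have -> : gb j 0 * (mu^-1 - lam^-1 * (ga j 0 * gb j 0)) =
  mu^-1 * gb j 0 - lam^-1 * ga j 0 * (gb j 0 * gb j 0) by ring.
by rewrite g2 mulr1.
Qed.

End PairOfMinimizers.

Hypothesis Tinj : forall x1 x2 : 'cV[R]_n, T *m x1 = T *m x2 -> x1 = x2.

Lemma ker_trivial (x : 'cV[R]_n) : T *m x = 0 -> x = 0.
Proof. by rewrite -(mulmx0 _ T) => /Tinj. Qed.

(* Since [T] has a left inverse, every coordinate of [v] is bounded by a fixed
   multiple of the l1 norm of [T v]. *)
Lemma coord_le_image_l1 : exists C : R, 0 <= C /\
  forall (v : 'cV[R]_n) i, `|v i 0| <= C * \sum_(k < m) `|(T *m v) k 0|.
Proof.
have [L LT] := left_inverse_of_inj ker_trivial.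
exists (\sum_(i < n) \sum_(k < m) `|L i k|).
split=> [|v i]; first by do 2![apply: sumr_ge0 => ? _].
have -> : v i 0 = (L *m (T *m v)) i 0 by rewrite mulmxA LT mul1mx.
rewrite mxE (le_trans (ler_norm_sum _ _ _)) // mulr_sumr.
apply: ler_sum => k _; rewrite normrM ler_wpM2r //.
rewrite (bigD1 i) //= (bigD1 k) //= -addrA lerDl.
by rewrite addr_ge0 // sumr_ge0 // => *; rewrite sumr_ge0.
Qed.

(* Lipschitz-type dependence of lasso minimizers on [1/lam]: combine the
   energy estimate, Cauchy-Schwarz and [coord_le_image_l1]. *)
Lemma lasso_min_lipschitz : exists K : R, 0 < K /\
  forall lam mu (a b : 'cV[R]_n), 0 < mu -> mu <= lam ->
  is_lasso_min T y lam a -> is_lasso_min T y mu b ->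
  forall i, `|a i 0 - b i 0| <= K * (mu^-1 - lam^-1).
Proof.
have [C [C0 HC]] := coord_le_image_l1.
exists (C ^+ 2 * (m * n)%:R + 1); split; first by rewrite ltr_pwDr // mulr_ge0 ?sqr_ge0.
move=> lam mu a b mu0 mulam amin bmin.
set D := mu^-1 - lam^-1.
have D0 : 0 <= D by rewrite subr_ge0 lef_pV2 ?posrE // (lt_le_trans mu0).
set P := \sum_(k < m) `|(T *m (a - b)) k 0|.
have P0 : 0 <= P by apply: sumr_ge0.
have coordP i : `|a i 0 - b i 0| <= C * P by have := HC (a - b) i; rewrite !mxE.
have l1P : \sum_(i < n) `|a i 0 - b i 0| <= n%:R * (C * P).
  by rewrite mulr_natl -[n in _ *+ n]card_ord -sumr_const; apply: ler_sum.
have P2 : P ^+ 2 <= m%:R * (D * (n%:R * (C * P))).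
  apply: le_trans (l1_sqr_le _) _; rewrite ler_wpM2l //.
  by apply: le_trans (lasso_min_energy mu0 mulam amin bmin) _; rewrite ler_wpM2l.
have PD : P <= m%:R * n%:R * C * D.
  have mnCD : 0 <= m%:R * n%:R * C * D by rewrite !mulr_ge0.
  have : P * P <= (m%:R * n%:R * C * D) * P by move: P2; rewrite expr2; lra.
  nra.
move=> i; apply: le_trans (coordP i) _.
have : C * P <= C * (m%:R * n%:R * C * D) by rewrite ler_wpM2l.
rewrite natrM; nra.
Qed.

Lemma lasso_min_unique lam (a b : 'cV[R]_n) : 0 < lam ->
  is_lasso_min T y lam a -> is_lasso_min T y lam b -> a = b.
Proof.
move=> lam0 amin bmin; have [K [_ HK]] := lasso_min_lipschitz.
apply/matrixP => i j; rewrite (ord1 j); apply/eqP; rewrite -subr_eq0 -normr_le0.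
by have := HK _ _ _ _ lam0 (lexx lam) amin bmin i; rewrite subrr mulr0.
Qed.

End LassoOptimality.

Section Embedding.
Variables (R : realFieldType) (n : nat) (J : {set 'I_n}).

(* [embedJ] extends vectors indexed by [J] (in increasing order) by zero;
   its transpose restricts vectors to [J]. *)
Definition embedJ : 'M[R]_(n, #|J|) := colsub (fun r : 'I_#|J| => enum_val r) 1%:M.

Lemma colsJ_embed m (T : 'M[R]_(m, n)) : colsJ T J = T *m embedJ.
Proof. by rewrite /colsJ /embedJ mulmx_colsub mulmx1. Qed.

Lemma embedJ_tr (u : 'cV[R]_n) : embedJ^T *m u = \col_r u (enum_val r) 0.
Proof.
apply/matrixP => r j; rewrite (ord1 j) !mxE (bigD1 (enum_val r)) //= !mxE eqxx mul1r.
by rewrite big1 ?addr0 // => i ir; rewrite !mxE (negbTE ir) mul0r.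
Qed.

Lemma embedJ_orth : embedJ^T *m embedJ = 1%:M.
Proof.
apply/matrixP => r s; rewrite {2}/embedJ mulmx_colsub mulmx1 !mxE.
by rewrite (inj_eq enum_val_inj) eq_sym.
Qed.

Lemma embedJ_restrict (v : 'cV[R]_n) : (forall i, i \notin J -> v i 0 = 0) ->
  embedJ *m (embedJ^T *m v) = v.
Proof.
move=> vJ; apply/matrixP => i j; rewrite (ord1 j).
have -> : v i 0 = (1%:M *m v) i 0 by rewrite mul1mx.
rewrite embedJ_tr !mxE.
under eq_bigr do rewrite !mxE.
rewrite -(big_enum_val (A := mem J) (fun k => (i == k)%:R * v k 0)) big_mkcond /=.
apply: eq_bigr => k _; rewrite mxE.
by case: ifP => // /negbT /vJ ->; rewrite mulr0.
Qed.

End Embedding.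

Section PositiveCone.
Variables (R : realFieldType) (m n : nat) (T : 'M[R]_(m, n)).
Hypothesis Tinj : forall x1 x2 : 'cV[R]_n, T *m x1 = T *m x2 -> x1 = x2.

Lemma colsJ_ker (J : {set 'I_n}) (x : 'cV[R]_#|J|) : colsJ T J *m x = 0 -> x = 0.
Proof.
rewrite colsJ_embed -mulmxA => /(ker_trivial Tinj) Ex.
by rewrite -[x]mul1mx -(embedJ_orth R J) -mulmxA Ex mulmx0.
Qed.

Lemma restricted_normal_eq (J : {set 'I_n}) (v : 'cV[R]_n) :
  (forall i, i \notin J -> v i 0 = 0) ->
  (embedJ R J)^T *m v = SJ T J *m ((embedJ R J)^T *m (T^T *m (T *m v))).
Proof.
move=> vJ; set z := (embedJ R J)^T *m v.
have CJz : colsJ T J *m z = T *m v by rewrite colsJ_embed -mulmxA embedJ_restrict.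
rewrite -[z in LHS](mulKmx (gram_unit_of_inj (@colsJ_ker J))) -[_ *m z]mulmxA CJz.
by rewrite /SJ; congr (_ *m _); rewrite colsJ_embed trmx_mul -mulmxA.
Qed.

Hypothesis Hcone : positive_cone_condition T.

Lemma cone_sign (J : {set 'I_n}) (v : 'cV[R]_n) (s w : 'I_n -> R) (p : 'I_n) :
  (forall i, i \notin J -> v i 0 = 0) ->
  (forall i, i \in J -> (T^T *m (T *m v)) i 0 = s i * w i) ->
  (forall i, i \in J -> `|s i| = 1 /\ 0 <= w i) ->
  p \in J -> (forall i, i \in J -> w i <= w p) ->
  0 <= s p * v p 0.
Proof.
move=> vJ normal sw Jp wmax.
have Jn0 : J != set0 by apply/set0Pn; exists p.
pose q := enum_rank_in Jp p; have qp : enum_val q = p by rewrite enum_rankK_in.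
have := restricted_normal_eq vJ.
have -> : (embedJ R J)^T *m (T^T *m (T *m v)) = \col_r (s (enum_val r) * w (enum_val r)).
  by apply/matrixP => r j; rewrite (ord1 j) embedJ_tr [LHS]mxE [RHS]mxE normal ?enum_valP.
move=> /(congr1 (fun u : 'cV_#|J| => s p * u q 0)); rewrite embedJ_tr mxE qp => ->.
rewrite -qp; apply: diag_dominant_sign (Hcone Jn0 q) _ _ _ => r.
- exact: (sw _ (enum_valP r)).1.
- exact: (sw _ (enum_valP r)).2.
- by rewrite qp wmax ?enum_valP.
Qed.

(* Otherwise pick, among the
   indices where [a] vanishes and [b] does not, an index [k] of maximal pair
   weight; it is maximal on the whole support of [b], since the weight is
   minimal where [a] does not vanish.  There [a - b = -b], and [cone_sign]
   would give [sign(b_k) (-b_k) >= 0], contradicting [b_k != 0]. *)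
Lemma zero_set_sub_of_close (y : 'cV[R]_m) lam mu (a b : 'cV[R]_n) :
  0 < mu -> mu <= lam -> is_lasso_min T y lam a -> is_lasso_min T y mu b ->
  (forall i, a i 0 != 0 -> `|a i 0 - b i 0| < `|a i 0|) ->
  zero_set a \subset zero_set b.
Proof.
move=> mu0 mulam amin bmin close.
have D0 : 0 <= mu^-1 - lam^-1 by rewrite subr_ge0 lef_pV2 ?posrE ?(lt_le_trans mu0).
pose J := [set j | b j 0 != 0]; pose w := pair_weight T y lam mu a b.
have Ja j : a j 0 != 0 -> j \in J.
  move=> aj; rewrite inE; apply: contraTneq (close j aj) => ->.
  by rewrite subr0 ltxx.
apply/subsetP => i; rewrite !inE => ai0; apply/negPn/negP => bi0.
have Pi : [pred j | (j \in J) && (a j 0 == 0)] i by rewrite /= inE bi0.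
have [k /andP [Jk /eqP ak0] kmax] := arg_maxP w Pi.
suff : 0 <= l1_subgrad T y mu b k 0 * (a - b) k 0.
  rewrite [(a - b) k 0]mxE [(- b) k 0]mxE ak0 sub0r mulrN (lasso_min_subgrad mu0 bmin k).2.
  by rewrite oppr_ge0 normr_le0; rewrite inE in Jk; rewrite (negbTE Jk).
apply: (@cone_sign J (a - b) (fun j => l1_subgrad T y mu b j 0) w k) => // j Jj.
- have /eqP aj : a j 0 == 0 by apply: contraNT Jj; apply: Ja.
  by move: Jj; rewrite inE negbK => /eqP bj; rewrite !mxE aj bj subr0.
- by rewrite inE in Jj; apply: normal_eq_pair_weight.
- have [_ gbb] := lasso_min_subgrad mu0 bmin j; rewrite inE in Jj.
  split; first exact: subgrad_norm1 gbb Jj.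
  exact: le_trans D0 (pair_weight_ge mu0 mulam amin bmin j).
- have [aj|aj] := eqVneq (a j 0) 0; first by apply: kmax; rewrite /= Jj aj eqxx.
  rewrite /w (pair_weight_support mu0 mulam amin bmin aj (close j aj)).
  exact: pair_weight_ge.
Qed.

End PositiveCone.

Lemma min_nonzero_modulus (R : realFieldType) n (x : 'cV[R]_n) :
  exists d : R, 0 < d /\ forall i, x i 0 != 0 -> d <= `|x i 0|.
Proof.
case: (pickP [pred i | x i 0 != 0]) => [i0 xi0 | none]; last first.
  by exists 1; split=> // i; have := none i => /= ->.
have [i xi imin] := arg_minP (fun i => `|x i 0|) xi0.
by exists `|x i 0|; split; [rewrite normr_gt0 | exact: imin].
Qed.

Lemma small_step (R : realFieldType) (K d lam : R) : 0 < K -> 0 < d -> 0 < lam ->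
  exists eps, 0 < eps /\ eps < lam /\
    forall mu, lam - eps <= mu -> mu <= lam -> 0 < mu /\ K * (mu^-1 - lam^-1) < d.
Proof.
move=> K0 d0 lam0; pose e := d * lam ^+ 2 / (4 * K).
have e0 : 0 < e by rewrite /e divr_gt0 ?mulr_gt0 ?exprn_gt0 ?ltr0n.
have Ke : K * e = d * lam ^+ 2 / 4 by rewrite /e; field; rewrite gt_eqF.
exists (Num.min (lam / 2) e); rewrite lt_min e0 divr_gt0 //; split=> //.
have [eps_half eps_e] : Num.min (lam / 2) e <= lam / 2 /\ Num.min (lam / 2) e <= e.
  by rewrite !ge_min !lexx orbT.
split; first by lra.
move=> mu mu1 mu2; have mu0 : 0 < mu by lra.
split=> //; rewrite -(ltr_pM2r (mulr_gt0 lam0 mu0)).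
have -> : K * (mu^-1 - lam^-1) * (lam * mu) = K * (lam - mu).
  by field; rewrite !gt_eqF.
have : K * (lam - mu) <= K * e by apply: ler_wpM2l; [exact: ltW | lra].
have : d * (lam * (lam / 2)) <= d * (lam * mu).
  by apply: ler_wpM2l; [exact: ltW | apply: ler_wpM2l; [exact: ltW | lra]].
rewrite Ke; nra.
Qed.

Theorem mainTheorem16 (R : realType) (m n : nat) (T : 'M[R]_(m, n))
  (y : 'cV[R]_m) (lam : R) :
  (forall x1 x2 : 'cV[R]_n, T *m x1 = T *m x2 -> x1 = x2) ->
  positive_cone_condition T ->
  0 < lam ->
  exists eps : R, 0 < eps /\ eps < lam /\
    forall mu : R, lam - eps <= mu -> mu <= lam ->
      forall xl xm : 'cV[R]_n,
        is_lasso_min T y lam xl -> is_lasso_min T y mu xm ->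
        zero_set xl \subset zero_set xm.
Proof.
move=> Tinj cone lam0.
have [K [K0 lipschitz]] := lasso_min_lipschitz y Tinj.
(* Without a minimizer for [lam] the claim is vacuous. *)
have [[a amin] | nomin] := classic (exists a, is_lasso_min T y lam a); last first.
  exists (lam / 2); split; first by rewrite divr_gt0.
  split; first by lra.
  by move=> mu _ _ xl xm xlmin; case: nomin; exists xl.
have [d [d0 dmin]] := min_nonzero_modulus a.
have [eps [eps0 [epslam step]]] := small_step K0 d0 lam0.
exists eps; do 2!split=> //.
move=> mu mu1 mu2 xl b xlmin bmin; have [mu0 Kd] := step mu mu1 mu2.
rewrite (lasso_min_unique Tinj lam0 xlmin amin).
apply: (zero_set_sub_of_close Tinj cone mu0 mu2 amin bmin) => i ai.
exact: le_lt_trans (lipschitz _ _ _ _ mu0 mu2 amin bmin i) (lt_le_trans Kd (dmin i ai)).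
Qed.
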